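(* There is a constant $C_t>0$, independent of $h$, such that for all $\phi\in E_h(\Omega)$, all $T\in\mathcal T_h$ and every edge $e$ of $T$ (with $\nabla\phi$ taken as the gradient of $\phi|_T$), $$\|\beta\nabla\phi\cdot\mathbf n_e\|_{L^2(e)}^2\le C_t\,h^{-1}\,\|\beta\nabla\phi\|_{L^2(T)}^2.$$
   Context: Let $\Omega\subset\mathbb R^2$ be a convex polygonal domain, $\Omega=\Omega_1\cup\Gamma\cup\Omega_2$ with $\Omega_1,\Omega_2$ (also written $\Omega^-,\Omega^+$) disjoint open subdomains separated by a $C^2$ interface curve $\Gamma$. The coefficient $\beta$ satisfies $\beta|_{\Omega_i}\in C^1(\Omega_i)$ and $0<\underline\beta<\beta<\overline\beta$. Mesh: $\mathcal T_h$ is a regular triangulation of $\Omega$ of mesh size $h$, not necessarily aligned with $\Gamma$; triangles cut by $\Gamma$ are interface elements. Each edge $e$ carries a fixed unit normal $\mathbf n_e$. IFEM space: on a non-interface triangle $S_h(T)=\mathcal P^1(T)$. An interface triangle $T$ with vertices $A_1,A_2,A_3$ is divided by the interface (represented in $T$ by the segment joining the two points where $\Gamma$ crosses $\partial T$) into $T^+\subset\Omega^+$, $T^-\subset\Omega^-$, and $\widehat S_h(T)=\mathrm{span}\{\hat\lambda_1,\hat\lambda_2,\hat\lambda_3\}$, where $\hat\lambda_j$ is the unique function linear on each of $T^\pm$ with $\hat\lambda_j(A_i)=\delta_{ij}$ that is continuous and has continuous $\beta\nabla\hat\lambda_j\cdot\mathbf n_\Gamma$ across the interface ($\mathbf n_\Gamma$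 the unit normal to the interface). $\widehat S_h(\Omega)$ consists of the functions $\phi$ with $\phi|_T\in S_h(T)$ (non-interface $T$) or $\phi|_T\in\widehat S_h(T)$ (interface $T$), single-valued at mesh vertices and vanishing at vertices on $\partial\Omega$. $C_h(\Omega)$ is the space of piecewise constants on $\mathcal T_h$, and $E_h(\Omega)=\widehat S_h(\Omega)+C_h(\Omega)$. *)

From HB Require Import structures.
From mathcomp Require Import all_boot all_order all_algebra.
From mathcomp Require Import all_classical all_reals all_analysis.
Set Implicit Arguments. Unset Strict Implicit. Unset Printing Implicit Defensive.
Import Order.TTheory GRing.Theory Num.Theory numFieldNormedType.Exports.
Local Open Scope classical_set_scope.
Local Open Scope ring_scope.

Section IFE.
Variable R : realType.

Definition pt := (R * R)%type.
Definition padd (p q : pt) : pt := (p.1 + q.1, p.2 + q.2).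
Definition psub (p q : pt) : pt := (p.1 - q.1, p.2 - q.2).
Definition pscale (t : R) (p : pt) : pt := (t * p.1, t * p.2).
Definition dot (p q : pt) : R := p.1 * q.1 + p.2 * q.2.
Definition det2 (p q : pt) : R := p.1 * q.2 - p.2 * q.1.
Definition dist (p q : pt) : R := Num.sqrt (dot (psub p q) (psub p q)).
Definition rot90 (p : pt) : pt := (- p.2, p.1).

Definition segpar (A B : pt) (t : R) : pt := padd A (pscale t (psub B A)).
Definition seg (A B : pt) : set pt := [set segpar A B t | t in `[0, 1]].
Definition unit_normal (A B : pt) : pt := pscale (dist A B)^-1 (rot90 (psub B A)).

Definition conv_hull (P : seq pt) : set pt :=
  [set x | exists w : nat -> R, (forall i, 0 <= w i) /\
     \sum_(i < size P) w i = 1 /\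
     x = (\sum_(i < size P) w i * (nth (0,0) P i).1,
          \sum_(i < size P) w i * (nth (0,0) P i).2)].

Definition convex_polygonal_domain (Omega : set pt) : Prop :=
  exists P : seq pt, Omega = interior (conv_hull P) /\ Omega !=set0.

Definition tri := (pt * pt * pt)%type.
Definition v1 (T : tri) := T.1.1.
Definition v2 (T : tri) := T.1.2.
Definition v3 (T : tri) := T.2.
Definition is_vertex (T : tri) (v : pt) := v = v1 T \/ v = v2 T \/ v = v3 T.
Definition nondegenerate (T : tri) := det2 (psub (v2 T) (v1 T)) (psub (v3 T) (v1 T)) != 0.

Definition tri_point (T : tri) (s t : R) : pt :=
  padd (v1 T) (padd (pscale s (psub (v2 T) (v1 T))) (pscale t (psub (v3 T) (v1 T)))).
Definition tri_set (T : tri) : set pt :=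
  [set x | exists s t, 0 <= s /\ 0 <= t /\ s + t <= 1 /\ x = tri_point T s t].
Definition tri_int (T : tri) : set pt :=
  [set x | exists s t, 0 < s /\ 0 < t /\ s + t < 1 /\ x = tri_point T s t].
Definition tri_boundary (T : tri) : set pt :=
  seg (v1 T) (v2 T) `|` seg (v2 T) (v3 T) `|` seg (v3 T) (v1 T).
Definition is_edge (T : tri) (e : pt * pt) : Prop :=
  e = (v1 T, v2 T) \/ e = (v2 T, v3 T) \/ e = (v3 T, v1 T).

Definition area (T : tri) : R :=
  `|det2 (psub (v2 T) (v1 T)) (psub (v3 T) (v1 T))| / 2.
Definition perimeter (T : tri) : R :=
  dist (v1 T) (v2 T) + dist (v2 T) (v3 T) + dist (v3 T) (v1 T).
Definition diam (T : tri) : R :=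
  Num.max (dist (v1 T) (v2 T)) (Num.max (dist (v2 T) (v3 T)) (dist (v3 T) (v1 T))).
Definition inradius (T : tri) : R := 2 * area T / perimeter T.

Definition triangulation (Omega : set pt) (Th : seq tri) : Prop :=
  (forall T, T \in Th -> nondegenerate T) /\
  \bigcup_(T in [set T | T \in Th]) tri_set T = closure Omega /\
  (forall i j, (i < size Th)%N -> (j < size Th)%N -> i <> j ->
     let T0 : tri := ((0,0),(0,0),(0,0)) in
     let T := nth T0 Th i in let T' := nth T0 Th j in
     tri_int T `&` tri_int T' = set0 /\
     (tri_set T `&` tri_set T' = set0 \/
      (exists v, is_vertex T v /\ is_vertex T' v /\ tri_set T `&` tri_set T' = [set v]) \/
      (exists v w, v <> w /\ is_vertex T v /\ is_vertex T' v /\ is_vertex T w /\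
                   is_vertex T' w /\ tri_set T `&` tri_set T' = seg v w))).

Definition mesh_size (Th : seq tri) : R := \big[Num.max/0]_(T <- Th) diam T.

Definition shape_regular (I : Type) (Th : I -> seq tri) : Prop :=
  exists sigma : R, 0 < sigma /\
    forall i T, T \in Th i -> diam T <= sigma * inradius T.
Definition quasi_uniform (I : Type) (Th : I -> seq tri) : Prop :=
  exists tau : R, 0 < tau /\
    forall i T, T \in Th i -> mesh_size (Th i) <= tau * diam T.

Definition C2_fun (f : R -> R) : Prop :=
  (forall t, derivable f t 1) /\ (forall t, derivable (derive1 f) t 1) /\
  continuous (derive1 (derive1 f)).

(* Gamma is (the part in Omega of) a regular C^2 curve, simple except
   possibly for closing up: gamma(t) = (g1 t, g2 t), t in [a,b] *)
Definition C2_curve_in (Omega Gamma : set pt) : Prop :=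
  exists (a b : R) (g1 g2 : R -> R), a < b /\ C2_fun g1 /\ C2_fun g2 /\
    (forall t, (derive1 g1 t) ^+ 2 + (derive1 g2 t) ^+ 2 != 0) /\
    {in `[a, b[ &, injective (fun t => (g1 t, g2 t) : pt)} /\
    Gamma = Omega `&` [set ((g1 t, g2 t) : pt) | t in `[a, b]].

(* Omega = Omega1 u Gamma u Omega2, with Omega1 (= Omega^-), Omega2 (= Omega^+)
   disjoint subdomains separated by the C^2 interface Gamma *)
Definition interface_split (Omega Omega1 Omega2 Gamma : set pt) : Prop :=
  open Omega1 /\ open Omega2 /\ Omega1 !=set0 /\ Omega2 !=set0 /\
  connected Omega1 /\ connected Omega2 /\
  Omega1 `&` Omega2 = set0 /\ Gamma `&` Omega1 = set0 /\ Gamma `&` Omega2 = set0 /\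
  Omega = Omega1 `|` Gamma `|` Omega2 /\
  C2_curve_in Omega Gamma.

Definition C1_on (U : set pt) (f : pt -> R) : Prop :=
  (forall x, U x -> derivable f x ((1, 0) : pt) /\ derivable f x ((0, 1) : pt)) /\
  {in U, continuous ('D_((1, 0) : pt) f)} /\ {in U, continuous ('D_((0, 1) : pt) f)}.

Definition is_interface (Gamma : set pt) (T : tri) : Prop :=
  exists x, Gamma x /\ tri_int T x.

Definition affine := (R * pt)%type.
Definition aeval (f : affine) (x : pt) : R := f.1 + dot f.2 x.

(* side of the line through D, E: T^+ = {side >= 0}, T^- = {side < 0} *)
Definition side (D E x : pt) : R := det2 (psub E D) (psub x D).

(* fP (on T^+) and fM (on T^-) are the pieces of the IFE function of the
   interface triangle T, cut by the segment [D,E], with nodal values u: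
   nodal interpolation, continuity across the cut line (equality at D and E),
   and continuity of the flux bP grad fP . n = bM grad fM . n. *)
Definition local_ife (bP bM : R) (D E : pt) (T : tri) (u : pt -> R) (fP fM : affine) : Prop :=
  (forall v, is_vertex T v ->
     (0 <= side D E v -> aeval fP v = u v) /\ (side D E v < 0 -> aeval fM v = u v)) /\
  aeval fP D = aeval fM D /\ aeval fP E = aeval fM E /\
  bP * dot fP.2 (unit_normal D E) = bM * dot fM.2 (unit_normal D E).

Definition local_lin (T : tri) (u : pt -> R) (f : affine) : Prop :=
  forall v, is_vertex T v -> aeval f v = u v.

(* phi in E_h(Omega) = hat S_h(Omega) + C_h(Omega), represented elementwise by
   its two affine pieces pP T (on T^+) and pM T (on T^-); on non-interface
   elements pP T = pM T.  The data (cutD T, cutE T) are the points where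
   Gamma crosses dT, and (bP T, bM T) the values beta^+, beta^- used in the
   flux condition on T. *)
Definition in_Eh (Omega Gamma : set pt) (Th : seq tri) (cutD cutE : tri -> pt)
    (bP bM : tri -> R) (pP pM : tri -> affine) : Prop :=
  exists (u : pt -> R) (c : tri -> R) (qP qM : tri -> affine),
    (forall T v, T \in Th -> is_vertex T v -> ~ Omega v -> u v = 0) /\
    forall T, T \in Th ->
      pP T = ((qP T).1 + c T, (qP T).2) /\ pM T = ((qM T).1 + c T, (qM T).2) /\
      (is_interface Gamma T ->
         local_ife (bP T) (bM T) (cutD T) (cutE T) T u (qP T) (qM T)) /\
      (~ is_interface Gamma T -> qP T = qM T /\ local_lin T u (qP T)).

Definition grad_phi (Gamma : set pt) (cutD cutE : tri -> pt) (pP pM : tri -> affine)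
    (T : tri) (x : pt) : pt :=
  if `[< is_interface Gamma T >] then
    (if 0 <= side (cutD T) (cutE T) x then (pP T).2 else (pM T).2)
  else (pP T).2.

Definition edge_flux_sq (beta : pt -> R) (g : pt -> pt) (A B : pt) : \bar R :=
  ((dist A B)%:E *
   \int[@lebesgue_measure R]_(t in `[0%R, 1%R])
      ((beta (segpar A B t) * dot (g (segpar A B t)) (unit_normal A B)) ^+ 2)%:E)%E.

Definition tri_energy (beta : pt -> R) (g : pt -> pt) (T : tri) : \bar R :=
  (\int[(@lebesgue_measure R \x @lebesgue_measure R)%E]_(x in tri_set T)
      ((beta x) ^+ 2 * dot (g x) (g x))%:E)%E.

End IFE.

(* On an element [T], [phi] has at most two affine pieces, and continuity along
   the cut together with the flux condition makes their squared gradients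
   comparable up to [K = 1 + (bmax / bmin)^2]: [|grad phi|^2] is, up to [K], a
   constant [S] on [T]. The edge flux is then at most [|e| bmax^2 K S], with
   [|e| <= h_T], while shape regularity puts a square of side [h_T / (3 sigma)]
   around the centroid inside [T], so the energy is at least
   [bmin^2 (S / K) h_T^2 / (9 sigma^2)]. This is the bound with [h_T^-1];
   quasi-uniformity turns [h_T^-1] into [tau h^-1]. *)

From Pilot Require Import Defs.
From HB Require Import structures.
From mathcomp Require Import all_boot all_order all_algebra.
From mathcomp Require Import all_classical all_reals all_analysis.
From mathcomp Require Import ring lra.
Set Implicit Arguments. Unset Strict Implicit. Unset Printing Implicit Defensive.
Import Order.TTheory GRing.Theory Num.Theory numFieldNormedType.Exports.
Local Open Scope classical_set_scope.
Local Open Scope ring_scope.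

Section PlaneGeometry.
Variable R : realType.
Implicit Types (p q g w A B : pt R) (T : tri R).

Lemma dot_self_ge0 p : 0 <= dot p p.
Proof. by rewrite /dot addr_ge0 // -expr2 sqr_ge0. Qed.

Lemma dist_ge0 p q : 0 <= dist p q.
Proof. exact: sqrtr_ge0. Qed.

Lemma distC p q : dist p q = dist q p.
Proof. by rewrite /dist /dot /psub /=; congr Num.sqrt; ring. Qed.

Lemma dist_sqr A B : dist A B ^+ 2 = dot (psub B A) (psub B A).
Proof. by rewrite sqr_sqrtr ?dot_self_ge0 // /dot /psub /=; ring. Qed.

Lemma dist_eq0 p q : dist p q = 0 -> p = q.
Proof.
move=> /eqP; rewrite sqrtr_eq0 /dot /psub /= => h.
have s1 := sqr_ge0 (p.1 - q.1); have s2 := sqr_ge0 (p.2 - q.2).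
rewrite -!expr2 in h.
have h1 : (p.1 - q.1) ^+ 2 = 0 by apply/eqP; rewrite eq_le s1 andbT; lra.
have h2 : (p.2 - q.2) ^+ 2 = 0 by apply/eqP; rewrite eq_le s2 andbT; lra.
move: h1 h2 => /eqP; rewrite sqrf_eq0 subr_eq0 => /eqP e1 /eqP.
rewrite sqrf_eq0 subr_eq0 => /eqP e2.
by rewrite [p]surjective_pairing [q]surjective_pairing e1 e2.
Qed.

Lemma norm_psub1_le_dist p q : `|(psub p q).1| <= dist p q.
Proof.
rewrite -sqrtr_sqr; apply: ler_wsqrtr.
by rewrite /dot lerDl -expr2 sqr_ge0.
Qed.

Lemma norm_psub2_le_dist p q : `|(psub p q).2| <= dist p q.
Proof.
rewrite -sqrtr_sqr; apply: ler_wsqrtr.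
by rewrite /dot lerDr -expr2 sqr_ge0.
Qed.

Lemma det2C p q : det2 p q = - det2 q p.
Proof. by rewrite /det2; ring. Qed.

Lemma dot_rot90_sqr g w :
  dot g w ^+ 2 + dot g (rot90 w) ^+ 2 = dot g g * dot w w.
Proof. by rewrite /dot /rot90 /=; ring. Qed.

Lemma dot_unit_normal g A B :
  dot g (unit_normal A B) = (dist A B)^-1 * dot g (rot90 (psub B A)).
Proof. by rewrite /unit_normal /dot /pscale /=; ring. Qed.

Lemma dot_unit_normal_sqr_le g A B : dot g (unit_normal A B) ^+ 2 <= dot g g.
Proof.
rewrite dot_unit_normal exprMn exprVn.
have [->|dAB] := eqVneq (dist A B) 0; first by rewrite expr0n invr0 mul0r dot_self_ge0.
have dAB2 : 0 < dist A B ^+ 2 by rewrite exprn_gt0 // lt0r dAB dist_ge0.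
by rewrite mulrC ler_pdivrMr // dist_sqr -dot_rot90_sqr lerDr sqr_ge0.
Qed.

Lemma sqr_le_transmission (a b bP bM bmin bmax : R) :
  bP * a = bM * b -> 0 < bmin -> bmin <= bP -> 0 <= bM -> bM <= bmax ->
  a ^+ 2 <= (bmax / bmin) ^+ 2 * b ^+ 2.
Proof.
move=> hab bmin0 bminP bM0 bMmax.
rewrite expr_div_n mulrAC ler_pdivlMr ?exprn_gt0 //.
have bP0 : 0 <= bP by rewrite (le_trans (ltW bmin0)).
have e1 : a ^+ 2 * bmin ^+ 2 <= a ^+ 2 * bP ^+ 2.
  by rewrite ler_wpM2l ?sqr_ge0 // ler_sqr ?nnegrE // ltW.
have e2 : bM ^+ 2 * b ^+ 2 <= bmax ^+ 2 * b ^+ 2.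
  by rewrite ler_wpM2r ?sqr_ge0 // ler_sqr ?nnegrE // (le_trans bM0).
by rewrite (le_trans e1) // -exprMn mulrC hab exprMn.
Qed.

Lemma transmission_dot_le gP gM (D E : pt R) (bP bM bmin bmax : R) :
  D <> E -> dot gP (psub E D) = dot gM (psub E D) ->
  bP * dot gP (unit_normal D E) = bM * dot gM (unit_normal D E) ->
  0 < bmin -> bmin <= bP -> 0 <= bM -> bM <= bmax ->
  dot gP gP <= (1 + (bmax / bmin) ^+ 2) * dot gM gM.
Proof.
move=> DE tangential flux bmin0 bminP bM0 bMmax.
set w := psub E D.
have dDE : dist D E != 0 by apply/eqP => /dist_eq0.
have ww : 0 < dot w w by rewrite -dist_sqr exprn_gt0 // lt0r dDE dist_ge0.
move: flux; rewrite !dot_unit_normal mulrCA [bM * _]mulrCA.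
move=> /(mulfI (invr_neq0 dDE)) /sqr_le_transmission /(_ bmin0 bminP bM0 bMmax) normal.
rewrite -(ler_pM2r ww) -mulrA -!dot_rot90_sqr -/w tangential.
have := sqr_ge0 (dot gM w); have := sqr_ge0 (dot gM (rot90 w)).
have := sqr_ge0 (bmax / bmin); nra.
Qed.

Lemma aeval_eq_tangential (f f' : affine R) (D E : pt R) :
  aeval f D = aeval f' D -> aeval f E = aeval f' E ->
  dot f.2 (psub E D) = dot f'.2 (psub E D).
Proof. by rewrite /aeval /dot /psub /=; lra. Qed.

End PlaneGeometry.

Lemma grad_phi_sqr_le (R : realType) (Omega Gamma : set (pt R)) (Th : seq (tri R))
    (cutD cutE : tri R -> pt R) (bP bM : tri R -> R) (pP pM : tri R -> affine R)
    (T : tri R) (bmin bmax : R) :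
  in_Eh Omega Gamma Th cutD cutE bP bM pP pM -> T \in Th ->
  (is_interface Gamma T -> cutD T <> cutE T) -> 0 < bmin ->
  bmin <= bP T <= bmax -> bmin <= bM T <= bmax ->
  forall x y, let g := grad_phi Gamma cutD cutE pP pM T in
  dot (g x) (g x) <= (1 + (bmax / bmin) ^+ 2) * dot (g y) (g y).
Proof.
move=> [u [c [qP [qM [_ hEh]]]]] Th_T hcut bmin0 /andP[bP1 bP2] /andP[bM1 bM2] x y.
rewrite /grad_phi /=; have [-> [-> [hI _]]] := hEh T Th_T.
have K1 : 1 <= 1 + (bmax / bmin) ^+ 2 by rewrite lerDl sqr_ge0.
case: (pselect (is_interface Gamma T)) => HI; last first.
  by rewrite asboolF //= ler_peMl ?dot_self_ge0.
have [_ [hD [hE flux]]] := hI HI.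
have bP0 : 0 <= bP T := le_trans (ltW bmin0) bP1.
have bM0 : 0 <= bM T := le_trans (ltW bmin0) bM1.
have tangential := aeval_eq_tangential hD hE.
have PM := transmission_dot_le (hcut HI) tangential flux bmin0 bP1 bM0 bM2.
have MP := transmission_dot_le (hcut HI) (esym tangential) (esym flux) bmin0 bM1 bP0 bP2.
by rewrite asboolT //; do 2 case: ifP => _ /=; rewrite ?ler_peMl ?dot_self_ge0.
Qed.

Section TriangleGeometry.
Variable R : realType.
Implicit Types (x y e A B : pt R) (T : tri R).

Definition centroid T : pt R :=
  (((v1 T).1 + (v2 T).1 + (v3 T).1) / 3, ((v1 T).2 + (v2 T).2 + (v3 T).2) / 3).

Definition det_tri T : R := det2 (psub (v2 T) (v1 T)) (psub (v3 T) (v1 T)).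

(* The coordinates [(s, t)] of [x = tri_point T s t], by Cramer's rule. *)
Definition bary1 T x : R := det2 (psub x (v1 T)) (psub (v3 T) (v1 T)) / det_tri T.
Definition bary2 T x : R := det2 (psub (v2 T) (v1 T)) (psub x (v1 T)) / det_tri T.

Lemma tri_point_bary T x : Defs.nondegenerate T -> tri_point T (bary1 T x) (bary2 T x) = x.
Proof.
rewrite /Defs.nondegenerate /bary1 /bary2 /det_tri /tri_point /det2 /padd /pscale /psub /=.
by move=> nd; rewrite [x]surjective_pairing; congr (_, _); field.
Qed.

Lemma bary_tri_set T x : Defs.nondegenerate T ->
  0 <= bary1 T x -> 0 <= bary2 T x -> 0 <= 1 - bary1 T x - bary2 T x -> tri_set T x.
Proof.
move=> nd s0 t0 st1; exists (bary1 T x), (bary2 T x); rewrite tri_point_bary //.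
by do !split => //; rewrite -subr_ge0 opprD addrA.
Qed.

Lemma bary1_centroid T x : Defs.nondegenerate T ->
  bary1 T x = 1 / 3 - det2 (psub x (centroid T)) (psub (v1 T) (v3 T)) / det_tri T.
Proof.
by rewrite /Defs.nondegenerate /bary1 /det_tri /centroid /det2 /psub /= => nd; field.
Qed.

Lemma bary2_centroid T x : Defs.nondegenerate T ->
  bary2 T x = 1 / 3 - det2 (psub x (centroid T)) (psub (v2 T) (v1 T)) / det_tri T.
Proof.
by rewrite /Defs.nondegenerate /bary2 /det_tri /centroid /det2 /psub /= => nd; field.
Qed.

Lemma bary3_centroid T x : Defs.nondegenerate T ->
  1 - bary1 T x - bary2 T x =
  1 / 3 - det2 (psub x (centroid T)) (psub (v3 T) (v2 T)) / det_tri T.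
Proof.
by rewrite /Defs.nondegenerate /bary1 /bary2 /det_tri /centroid /det2 /psub /= => nd; field.
Qed.

Lemma norm_det2_le y e (r d : R) :
  `|y.1| <= r -> `|y.2| <= r -> `|e.1| <= d -> `|e.2| <= d ->
  `|det2 y e| <= 2 * r * d.
Proof.
move=> y1 y2 e1 e2; have r0 : 0 <= r := le_trans (normr_ge0 _) y1.
apply: le_trans (ler_normB _ _) _; rewrite !normrM.
have := ler_pM (normr_ge0 _) (normr_ge0 _) y1 e2.
have := ler_pM (normr_ge0 _) (normr_ge0 _) y2 e1; lra.
Qed.

Lemma third_minus_ge0 (X D : R) : D != 0 -> `|X| <= `|D| / 3 -> 0 <= 1 / 3 - X / D.
Proof.
move=> D0 hX; have : `|X / D| <= 1 / 3.
  by rewrite normrM normfV ler_pdivrMr ?normr_gt0 //; lra.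
by rewrite ler_norml; lra.
Qed.

Lemma edge_le_diam T A B : is_edge T (A, B) -> dist A B <= diam T.
Proof. by rewrite /diam => -[[-> ->]|[[-> ->]|[-> ->]]]; rewrite !le_max lexx ?orbT. Qed.

Lemma edge_coord_le_diam T A B : is_edge T (A, B) ->
  `|(psub B A).1| <= diam T /\ `|(psub B A).2| <= diam T.
Proof.
move=> /edge_le_diam; rewrite distC => BA.
by split; apply: le_trans BA; [exact: norm_psub1_le_dist|exact: norm_psub2_le_dist].
Qed.

Lemma diam_gt0 T : Defs.nondegenerate T -> 0 < diam T.
Proof.
move=> nd; apply: lt_le_trans (edge_le_diam (or_introl erefl)).
rewrite lt0r dist_ge0 andbT; apply/eqP => /dist_eq0 e.
by move: nd; rewrite /Defs.nondegenerate e /det2 /psub /= !subrr !mul0r subrr eqxx.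
Qed.

Lemma diam_le_perimeter T : diam T <= perimeter T.
Proof.
have := dist_ge0 (v1 T) (v2 T); have := dist_ge0 (v2 T) (v3 T).
have := dist_ge0 (v3 T) (v1 T).
by rewrite /perimeter /diam !ge_max; move=> *; apply/and3P; split; lra.
Qed.

Lemma shape_regular_diam_sqr T (sigma : R) : Defs.nondegenerate T ->
  diam T <= sigma * inradius T -> diam T ^+ 2 <= sigma * `|det_tri T|.
Proof.
move=> nd hsigma; have d0 := diam_gt0 nd; have dp := diam_le_perimeter T.
have p0 : 0 < perimeter T := lt_le_trans d0 dp.
move: hsigma; rewrite /inradius /area -/(det_tri T) [2 * _]mulrC divfK ?pnatr_eq0 //.
rewrite mulrA ler_pdivlMr // => hper.
by rewrite expr2 (le_trans _ hper) // ler_pM2l.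
Qed.

(* With [r = diam T / (6 sigma)], each [det2 (x - centroid T) e] along an edge [e]
   is at most [2 r diam T = diam T ^ 2 / (3 sigma) <= |det_tri T| / 3]. *)
Lemma centroid_square_sub_tri_set T (sigma : R) x : Defs.nondegenerate T -> 0 < sigma ->
  diam T <= sigma * inradius T ->
  `|x.1 - (centroid T).1| <= diam T / (6 * sigma) ->
  `|x.2 - (centroid T).2| <= diam T / (6 * sigma) -> tri_set T x.
Proof.
move=> nd s0 hsigma y1 y2; set y := psub x (centroid T).
have hdet := shape_regular_diam_sqr nd hsigma.
have d0 := diam_gt0 nd.
have det_le A B : is_edge T (A, B) -> `|det2 y (psub B A)| <= `|det_tri T| / 3.
  move=> /edge_coord_le_diam[e1 e2].
  apply: le_trans (norm_det2_le (y := y) y1 y2 e1 e2) _.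
  rewrite ler_pdivlMr // -(ler_pM2l s0); apply: le_trans hdet; rewrite le_eqVlt.
  by apply/orP; left; apply/eqP; field; lra.
apply: bary_tri_set => //; [rewrite bary1_centroid|rewrite bary2_centroid|rewrite bary3_centroid] => //;
  apply: third_minus_ge0 => //; apply: det_le.
- by right; right.
- by left.
- by right; left.
Qed.

Lemma segpar_in_tri_set T A B (t : R) :
  is_edge T (A, B) -> t \in `[0, 1] -> tri_set T (segpar A B t).
Proof.
rewrite in_itv /= => hE /andP[t0 t1].
rewrite /segpar /tri_set /tri_point /padd /pscale /psub /=.
case: hE => [[-> ->]|[[-> ->]|[-> ->]]].
- by exists t, 0; split; [lra|split; [lra|split; [lra|congr (_, _); ring]]].
- by exists (1 - t), t; split; [lra|split; [lra|split; [lra|congr (_, _); ring]]].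
- by exists 0, (1 - t); split; [lra|split; [lra|split; [lra|congr (_, _); ring]]].
Qed.

End TriangleGeometry.

Lemma lebesgue_square (R : realType) (c : pt R) (r : R) : 0 < r ->
  (@lebesgue_measure R \x @lebesgue_measure R)%E
    ([set` `[c.1 - r, c.1 + r]] `*` [set` `[c.2 - r, c.2 + r]]) = ((2 * r) ^+ 2)%:E.
Proof.
move=> r0; have side (a : R) : lebesgue_measure [set` `[a - r, a + r]] = (2 * r)%:E.
  rewrite lebesgue_measure_itv /= lte_fin ltrD2l gtrN //=.
  by rewrite -EFinB; congr _%:E; ring.
rewrite product_measure1E // expr2 EFinM.
by congr (_ * _)%E; exact: side.
Qed.

Local Open Scope ereal_scope.

Section NonnegIntegral.
Variables (d : measure_display) (T : measurableType d) (R : realType).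
Variable mu : {measure set T -> \bar R}.

(* No measurability is needed: a nonnegative integral is the supremum of the
   integrals of the simple functions below the integrand. *)
Lemma ge0_le_integral_patch (D1 D2 : set T) (f g : T -> \bar R) :
  (forall x, 0 <= f x) -> (forall x, 0 <= g x) ->
  (forall x, (f \_ D1) x <= (g \_ D2) x) ->
  \int[mu]_(x in D1) f x <= \int[mu]_(x in D2) g x.
Proof.
move=> f0 g0 fg.
rewrite (ge0_integralE mu (fun x _ => f0 x)) (ge0_integralE mu (fun x _ => g0 x)).
apply: ge_ereal_sup => _ [h hle <-]; apply: ereal_sup_ubound; exists h => //.
by move=> x; apply: le_trans (hle x) (fg x).
Qed.

Lemma cst_mul_measure_le_integral (Q D : set T) (F : T -> \bar R) (c : R) :
  measurable Q -> Q `<=` D -> (0 <= c)%R -> (forall x, 0 <= F x) ->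
  (forall x, D x -> c%:E <= F x) -> c%:E * mu Q <= \int[mu]_(x in D) F x.
Proof.
move=> mQ QD c0 F0 Fc; rewrite -integral_cst //.
apply: ge0_le_integral_patch => // x; rewrite /patch; case: ifPn => [|_]; last by case: ifP.
rewrite inE => /QD Dx; rewrite ifT ?inE //; exact: Fc.
Qed.

Lemma integral_le_cst_mul_measure (D : set T) (F : T -> \bar R) (M : R) :
  measurable D -> (0 <= M)%R -> (forall x, 0 <= F x) ->
  (forall x, D x -> F x <= M%:E) -> \int[mu]_(x in D) F x <= M%:E * mu D.
Proof.
move=> mD M0 F0 FM; rewrite -integral_cst //.
apply: ge0_le_integral_patch => // x; rewrite /patch; case: ifPn => // Dx.
by apply: FM; rewrite -inE.
Qed.

End NonnegIntegral.

Local Close Scope ereal_scope.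

Section ElementEstimates.
Variable R : realType.
Variables (beta : pt R -> R) (g : pt R -> pt R) (T : tri R).

Lemma edge_flux_sq_le A B (M : R) : is_edge T (A, B) ->
  (forall x, tri_set T x -> beta x ^+ 2 * dot (g x) (g x) <= M) ->
  (edge_flux_sq beta g A B <= (dist A B * M)%:E)%E.
Proof.
move=> hAB hM; set n := unit_normal A B.
have M0 : 0 <= M.
  apply: le_trans (hM _ (segpar_in_tri_set (t := 0) hAB _)); last by rewrite in_itv /= lexx ler01.
  by rewrite mulr_ge0 ?sqr_ge0 ?dot_self_ge0.
rewrite /edge_flux_sq EFinM; apply: lee_wpmul2l; first by rewrite lee_fin dist_ge0.
have unit01 : lebesgue_measure [set` `[0, 1]] = 1%E :> \bar R.
  by rewrite lebesgue_measure_itv /= lte_fin ltr01 -EFinB subr0.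
rewrite -[M%:E]mule1 -unit01.
apply: integral_le_cst_mul_measure => // [t|t /= t01]; first by rewrite lee_fin sqr_ge0.
rewrite lee_fin exprMn; apply: le_trans (hM _ (segpar_in_tri_set hAB t01)).
by rewrite ler_wpM2l ?sqr_ge0 ?dot_unit_normal_sqr_le.
Qed.

Lemma tri_energy_ge0 : (0 <= tri_energy beta g T)%E.
Proof. by apply: integral_ge0 => x _; rewrite lee_fin mulr_ge0 ?sqr_ge0 ?dot_self_ge0. Qed.

Lemma tri_energy_ge (sigma m : R) : Defs.nondegenerate T -> 0 < sigma ->
  diam T <= sigma * inradius T -> 0 <= m ->
  (forall x, tri_set T x -> m <= beta x ^+ 2 * dot (g x) (g x)) ->
  ((m * (diam T / (3 * sigma)) ^+ 2)%:E <= tri_energy beta g T)%E.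
Proof.
move=> nd s0 hsigma m0 hm; set r := diam T / (6 * sigma).
have r0 : 0 < r by rewrite divr_gt0 ?diam_gt0 ?mulr_gt0.
have -> : diam T / (3 * sigma) = 2 * r by rewrite /r; field; lra.
rewrite EFinM -(lebesgue_square (centroid T) r0).
apply: cst_mul_measure_le_integral => //.
- exact: measurableX.
- move=> x [/= x1 x2]; apply: (centroid_square_sub_tri_set nd s0 hsigma).
    by move: x1; rewrite in_itv /= -ler_distl.
  by move: x2; rewrite in_itv /= -ler_distl.
- by move=> x; rewrite lee_fin mulr_ge0 ?sqr_ge0 ?dot_self_ge0.
Qed.

Lemma edge_flux_sq_le_tri_energy A B (sigma K bmin bmax : R) :
  Defs.nondegenerate T -> 0 < sigma -> diam T <= sigma * inradius T ->
  is_edge T (A, B) -> 0 < bmin -> 0 < K ->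
  (forall x, tri_set T x -> bmin <= beta x <= bmax) ->
  (forall x y, tri_set T x -> tri_set T y -> dot (g x) (g x) <= K * dot (g y) (g y)) ->
  (edge_flux_sq beta g A B <=
   ((3 * sigma * K * bmax / bmin) ^+ 2 / diam T)%:E * tri_energy beta g T)%E.
Proof.
move=> nd s0 hsigma hAB bmin0 K0 hbeta hK.
have d0 := diam_gt0 nd.
have Tc : tri_set T (centroid T).
  have r0 : 0 <= diam T / (6 * sigma) by rewrite divr_ge0 ?mulr_ge0 ?ltW.
  by apply: (centroid_square_sub_tri_set nd s0 hsigma); rewrite subrr normr0.
set S := dot (g (centroid T)) (g (centroid T)).
have S0 : 0 <= S by exact: dot_self_ge0.
have beta_sqr x : tri_set T x -> bmin ^+ 2 <= beta x ^+ 2 <= bmax ^+ 2.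
  move=> /hbeta /andP[b1 b2]; have b0 := le_trans (ltW bmin0) b1.
  by rewrite !ler_sqr ?nnegrE ?b0 ?b1 ?b2 ?(ltW bmin0) ?(le_trans b0 b2).
have flux_le := edge_flux_sq_le (M := bmax ^+ 2 * (K * S)) hAB.
have energy_ge := tri_energy_ge (m := bmin ^+ 2 * (S / K)) nd s0 hsigma.
apply: le_trans (flux_le _) _.
  move=> x Tx; have /andP[_ bx] := beta_sqr x Tx.
  by rewrite ler_pM ?sqr_ge0 ?dot_self_ge0 ?hK.
have m0 : 0 <= bmin ^+ 2 * (S / K) := mulr_ge0 (sqr_ge0 _) (divr_ge0 S0 (ltW K0)).
apply: le_trans (lee_wpmul2l _ (energy_ge m0 _)).
- rewrite -EFinM lee_fin.
  have -> : (3 * sigma * K * bmax / bmin) ^+ 2 / diam T *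
      (bmin ^+ 2 * (S / K) * (diam T / (3 * sigma)) ^+ 2) =
      diam T * (bmax ^+ 2 * (K * S)).
    by field; rewrite !gt_eqF.
  apply: ler_wpM2r; last exact: edge_le_diam hAB.
  exact: mulr_ge0 (sqr_ge0 _) (mulr_ge0 (ltW K0) S0).
- by rewrite lee_fin divr_ge0 ?sqr_ge0 ?ltW.
- move=> x Tx; have /andP[bx _] := beta_sqr x Tx.
  apply: ler_pM => //; [exact: sqr_ge0|exact: divr_ge0 S0 (ltW K0)|].
  by rewrite ler_pdivrMr // mulrC hK.
Qed.

End ElementEstimates.

Theorem mainTheorem8 (R : realType)
    (Omega Omega1 Omega2 Gamma : set (pt R)) (beta : pt R -> R) (bmin bmax : R)
    (I : Type) (Th : I -> seq (tri R))
    (cutD cutE : tri R -> pt R) (bP bM : tri R -> R) :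
  convex_polygonal_domain Omega ->
  interface_split Omega Omega1 Omega2 Gamma ->
  C1_on Omega1 beta -> C1_on Omega2 beta ->
  0 < bmin -> (forall x, closure Omega x -> bmin < beta x < bmax) ->
  (forall i, triangulation Omega (Th i)) ->
  shape_regular Th -> quasi_uniform Th ->
  (forall i T, T \in Th i -> is_interface Gamma T ->
     cutD T <> cutE T /\ Gamma `&` tri_boundary T = [set cutD T; cutE T]) ->
  (forall T, (exists x, closure Omega x /\ bP T = beta x) /\
             (exists x, closure Omega x /\ bM T = beta x)) ->
  exists Ct : R, 0 < Ct /\
    forall i (pP pM : tri R -> affine R),
      in_Eh Omega Gamma (Th i) cutD cutE bP bM pP pM ->
      forall T, T \in Th i -> forall A B, is_edge T (A, B) ->
        (edge_flux_sq beta (grad_phi Gamma cutD cutE pP pM T) A B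
         <= (Ct / mesh_size (Th i))%:E * tri_energy beta (grad_phi Gamma cutD cutE pP pM T) T)%E.
Proof.
move=> [_ [_ [x0 Omega_x0]]] _ _ _ bmin0 hbeta htri [sigma [s0 hsigma]] [tau [t0 htau]] hcut hbPM.
have beta_le x : closure Omega x -> bmin <= beta x <= bmax.
  by move=> /hbeta /andP[b1 b2]; rewrite !ltW.
have bmax0 : 0 < bmax.
  by have /andP[b1 b2] := hbeta _ (subset_closure Omega_x0); rewrite (lt_trans bmin0) ?(lt_trans b1).
set K := 1 + (bmax / bmin) ^+ 2; have K0 : 0 < K by rewrite ltr_pwDl ?sqr_ge0.
set C := (3 * sigma * K * bmax / bmin) ^+ 2.
have C0 : 0 < C by rewrite exprn_gt0 // divr_gt0 // !mulr_gt0.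
exists (tau * C); split; first exact: mulr_gt0.
move=> i pP pM hphi T Th_T A B hAB.
have [nondeg [cover _]] := htri i; have ndT := nondeg T Th_T.
have T_closure x : tri_set T x -> closure Omega x by rewrite -cover; exists T.
have [[xP [cxP ebP]] [xM [cxM ebM]]] := hbPM T.
have bPT : bmin <= bP T <= bmax by rewrite ebP beta_le.
have bMT : bmin <= bM T <= bmax by rewrite ebM beta_le.
have hgrad := grad_phi_sqr_le hphi Th_T (fun HI => (hcut i T Th_T HI).1) bmin0 bPT bMT.
apply: le_trans (edge_flux_sq_le_tri_energy (bmax := bmax) ndT s0 (hsigma i T Th_T) hAB bmin0 K0 _ _) _.
- by move=> x /T_closure /beta_le.
- by move=> x y _ _; exact: hgrad.
apply: lee_wpmul2r; first exact: tri_energy_ge0.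
have d0 := diam_gt0 ndT; have h_diam : diam T <= mesh_size (Th i) by rewrite /mesh_size le_bigmax_seq.
have h0 := lt_le_trans d0 h_diam; have h_tau := htau i T Th_T.
have : C / diam T <= tau * C / mesh_size (Th i).
  by rewrite ler_pdivrMr // mulrAC ler_pdivlMr //; nra.
by rewrite lee_fin.
Qed.
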